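(* Let $u:(a,b)\to(0,\infty)$ be a maximally extended solution of $\frac{u''}{1+(u')^2}=\frac{xu'}{2}-\frac u2+\frac{n-1}{u}$. If $b<\infty$ then $\lim_{x\to b}u(x)<\infty$; if $a>-\infty$ then $\lim_{x\to a}u(x)<\infty$.
   Context: $n\ge2$ is a fixed integer. ''Maximally extended'' means the solution cannot be extended as a positive $C^2$ solution to a larger interval. *)

From Stdlib Require Import Reals.
From Coquelicot Require Import Coquelicot.
Open Scope R_scope.

Definition in_ival (a b : Rbar) (x : R) : Prop := Rbar_lt a x /\ Rbar_lt x b.

Definition pos_C2_solution (n : nat) (a b : Rbar) (u : R -> R) : Prop :=
  Rbar_lt a b /\
  forall x : R, in_ival a b x ->
    0 < u x /\
    ex_derive u x /\
    ex_derive (Derive u) x /\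
    continuous (Derive (Derive u)) x /\
    Derive (Derive u) x / (1 + (Derive u x) ^ 2)
      = x * Derive u x / 2 - u x / 2 + (INR n - 1) / u x.

Definition maximal_solution (n : nat) (a b : Rbar) (u : R -> R) : Prop :=
  pos_C2_solution n a b u /\
  ~ (exists (a' b' : Rbar) (v : R -> R),
        Rbar_le a' a /\ Rbar_le b b' /\ (a' <> a \/ b' <> b) /\
        pos_C2_solution n a' b' v /\
        (forall x, in_ival a b x -> v x = u x)).

From Stdlib Require Import Reals Lra Psatz Classical.
From Coquelicot Require Import Coquelicot.
Open Scope R_scope.

(* For b <= 0 the energy (1/2) ln (1 + u'^2) - (n-1) ln u + u^2/4 has derivative
   x u'^2 / 2 <= 0, so it stays bounded near b; this bounds u' from above, and then
   u - P x is nonincreasing and bounded below, hence converges.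
   For b > 0 consider w = x u' - u: w' = x u'' and u'' has the sign of
   w/2 + (n-1)/u.  If w <= 0 throughout, (u/x)' = w/x^2 <= 0 gives u' <= u/x <= P and
   we conclude as before.  If w becomes positive it stays positive (w' > 0 wherever
   w = 0), so u increases, and 1/w + a u / (2 b) is nonincreasing, which bounds u.
   The left endpoint follows by the reflection x -> -x, which preserves the equation. *)

(* [auto_derive] leaves [Derive (fun t => f t) x] for unknown functions [f];
   rewrite them with the hypotheses [is_derive f x l] in context. *)
Ltac auto_derive_with_hyps :=
  auto_derive;
  [ repeat split; try (eexists; eassumption); auto
  | repeat match goal with
      | H : is_derive ?f ?x ?l |- context [Derive (fun t => ?f t) ?x] =>
          change (Derive (fun t => f t) x) with (Derive f x);
          rewrite (is_derive_unique f x l H)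
      end ].

Lemma nonincreasing_of_derive_nonpos (g dg : R -> R) (a b : R) :
  (forall x, a <= x < b -> is_derive g x (dg x)) ->
  (forall x, a <= x < b -> dg x <= 0) ->
  forall x y, a <= x -> x <= y -> y < b -> g y <= g x.
Proof.
  intros Hd Hneg x y Hx Hxy Hy.
  destruct (MVT_gen g x y dg) as [c [Hc Hmvt]];
    rewrite ?Rmin_left, ?Rmax_right in * by lra.
  - intros z Hz; apply Hd; lra.
  - intros z Hz; apply continuity_pt_filterlim.
    apply (ex_derive_continuous (V := R_NormedModule)).
    exists (dg z); apply Hd; lra.
  - assert (dg c * (y - x) <= 0) by (apply Rmult_le_0_r; [apply Hneg|]; lra).
    lra.
Qed.

Lemma nonincreasing_bounded_below_cvg (g : R -> R) (a b m : R) :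
  a < b ->
  (forall x y, a <= x -> x <= y -> y < b -> g y <= g x) ->
  (forall x, a <= x < b -> m <= g x) ->
  exists L, filterlim g (at_left b) (locally L).
Proof.
  intros Hab Hmon Hm.
  set (E := fun r => exists x, a <= x < b /\ r = - g x).
  destruct (completeness E) as [l [Hub Hlub]].
  - exists (- m); intros r [x [Hx ->]]; specialize (Hm x Hx); lra.
  - exists (- g a), a; split; [lra | reflexivity].
  exists (- l); apply filterlim_locally; intros [eps Heps]; simpl.
  assert (Hnear : exists xs, a <= xs < b /\ g xs < - l + eps).
  { apply NNPP; intro Hno.
    assert (Hle : l <= l - eps); [|lra].
    apply Hlub; intros r [x [Hx ->]].
    apply Rnot_lt_le; intro Hlt; apply Hno; exists x; split; [exact Hx | lra]. }
  destruct Hnear as [xs [Hxs Hgxs]].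
  assert (Hd : 0 < b - xs) by lra.
  exists (mkposreal _ Hd); intros y Hy Hyb; simpl in Hy.
  change (Rabs (y - b) < b - xs) in Hy; apply Rabs_def2 in Hy.
  assert (Hup : g y <= g xs) by (apply Hmon; lra).
  assert (Hlow : - g y <= l) by (apply Hub; exists y; split; [lra | reflexivity]).
  change (Rabs (g y - - l) < eps); apply Rabs_def1; lra.
Qed.

Lemma filterlim_left_plus_linear (g : R -> R) (P b L : R) :
  filterlim g (at_left b) (locally L) ->
  filterlim (fun y => g y + P * y) (at_left b) (locally (L + P * b)).
Proof.
  intro Hg.
  apply (filterlim_comp_2 (G := locally L) (H := locally (P * b))
           g (fun y => P * y) Rplus);
    [exact Hg | | exact (filterlim_plus L (P * b))].
  apply (filterlim_filter_le_1 (F := locally b)); [apply filter_le_within|].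
  apply (continuous_scal_r (V := R_NormedModule) P (fun y => y)), continuous_id.
Qed.

Lemma cvg_at_left_of_derive_le (u p : R -> R) (a b m P : R) :
  a < b -> 0 <= P ->
  (forall x, a <= x < b -> is_derive u x (p x)) ->
  (forall x, a <= x < b -> p x <= P) ->
  (forall x, a <= x < b -> m <= u x) ->
  exists L, filterlim u (at_left b) (locally L).
Proof.
  intros Hab HP Hd Hp Hm.
  set (g := fun y => u y - P * y).
  destruct (nonincreasing_bounded_below_cvg g a b (m - P * b)) as [L HL].
  - exact Hab.
  - apply (nonincreasing_of_derive_nonpos g (fun y => p y - P)).
    + intros x Hx; specialize (Hd x Hx); unfold g; auto_derive_with_hyps; ring.
    + intros x Hx; specialize (Hp x Hx); lra.
  - intros x Hx; specialize (Hm x Hx); unfold g; nra.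
  - exists (L + P * b).
    apply (filterlim_ext (fun y => g y + P * y)); [intro y; unfold g; ring|].
    now apply filterlim_left_plus_linear.
Qed.

Lemma continuity_pt_pos_near (w : R -> R) (z : R) :
  continuity_pt w z -> 0 < w z ->
  exists d, 0 < d /\ forall t, Rabs (t - z) < d -> 0 < w t.
Proof.
  intros Hc Hz; destruct (Hc (w z) Hz) as [d [Hd Hnear]].
  exists d; split; [exact Hd|]; intros t Ht.
  destruct (Req_dec t z) as [->|Hne]; [exact Hz|].
  assert (Hdist : Rabs (w t - w z) < w z)
    by (apply (Hnear t); split; [split; [exact I | auto] | exact Ht]).
  apply Rabs_def2 in Hdist; lra.
Qed.

Lemma first_zero (w : R -> R) (a y : R) :
  a < y -> (forall x, a <= x <= y -> continuity_pt w x) -> 0 < w a -> w y <= 0 ->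
  exists z, a < z <= y /\ w z = 0 /\ forall s, a <= s < z -> 0 < w s.
Proof.
  intros Hay Hc Hwa Hwy.
  set (S := fun t => a <= t <= y /\ forall s, a <= s <= t -> 0 < w s).
  assert (Sa : S a) by (split; [lra|]; intros s Hs; replace s with a by lra; exact Hwa).
  destruct (completeness S) as [z [Hub Hlub]];
    [exists y; intros t [Ht _]; lra | exists a; exact Sa |].
  assert (Haz : a <= z) by (apply Hub, Sa).
  assert (Hzy : z <= y) by (apply Hlub; intros t [Ht _]; lra).
  assert (Hpos : forall s, a <= s < z -> 0 < w s).
  { intros s Hs; apply NNPP; intro Hns.
    assert (Hzs : z <= s); [|lra].
    apply Hlub; intros t [Ht Hwt]; apply Rnot_lt_le; intro Hst; apply Hns, Hwt; lra. }
  assert (Hwz : w z <= 0).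
  { apply Rnot_lt_le; intro Hwz.
    assert (Hzy' : z < y) by (destruct (Req_dec z y); subst; lra).
    destruct (continuity_pt_pos_near w z (Hc z (conj Haz Hzy)) Hwz) as [d [Hd Hnear]].
    assert (Ht : S (Rmin y (z + d / 2))).
    { split; [split; [apply Rmin_glb; lra | apply Rmin_l]|].
      intros s Hs; destruct (Rlt_or_le s z); [apply Hpos; lra|].
      apply Hnear; pose proof (Rmin_r y (z + d / 2)); apply Rabs_def1; lra. }
    specialize (Hub _ Ht); assert (z < Rmin y (z + d / 2)) by (apply Rmin_glb_lt; lra); lra. }
  assert (Haz' : a < z) by (destruct (Req_dec a z); subst; lra).
  exists z; split; [lra|]; split; [|exact Hpos].
  apply Rle_antisym; [exact Hwz|]; apply Rnot_lt_le; intro Hneg.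
  destruct (continuity_pt_pos_near (fun t => - w t) z) as [d [Hd Hnear]];
    [now apply continuity_pt_opp, Hc | lra |].
  pose proof (Rmax_l a (z - d / 2)); pose proof (Rmax_r a (z - d / 2)).
  assert (Hs : Rmax a (z - d / 2) < z) by (apply Rmax_lub_lt; lra).
  specialize (Hpos (Rmax a (z - d / 2)) ltac:(lra)).
  assert (0 < - w (Rmax a (z - d / 2))); [|lra].
  apply Hnear; apply Rabs_def1; lra.
Qed.

Lemma is_derive_pos_at_zero_left (w : R -> R) (a z l : R) :
  a < z -> is_derive w z l -> 0 < l -> w z = 0 -> exists t, a < t < z /\ w t < 0.
Proof.
  intros Haz Hd Hl Hwz.
  destruct (proj1 (is_derive_Reals w z l) Hd l Hl) as [[d Hd0] Hquot]; simpl in Hquot.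
  set (h := - Rmin (d / 2) ((z - a) / 2)).
  assert (Hh : - (d / 2) <= h /\ - ((z - a) / 2) <= h /\ h < 0).
  { pose proof (Rmin_l (d / 2) ((z - a) / 2)); pose proof (Rmin_r (d / 2) ((z - a) / 2)).
    assert (0 < Rmin (d / 2) ((z - a) / 2)) by (apply Rmin_pos; lra).
    unfold h; lra. }
  assert (Habs : Rabs h < d) by (rewrite Rabs_left by lra; lra).
  specialize (Hquot h ltac:(lra) Habs); rewrite Hwz, Rminus_0_r in Hquot.
  apply Rabs_def2 in Hquot.
  exists (z + h); split; [lra|].
  assert (Hq : 0 < w (z + h) / h) by lra.
  replace (w (z + h)) with (w (z + h) / h * h) by (field; lra); nra.
Qed.

Lemma positive_barrier (w dw : R -> R) (a b : R) :
  (forall x, a <= x < b -> is_derive w x (dw x)) ->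
  (forall x, a <= x < b -> w x = 0 -> 0 < dw x) ->
  0 < w a -> forall y, a <= y < b -> 0 < w y.
Proof.
  intros Hd Hzero Hwa y Hy; apply Rnot_le_lt; intro Hwy.
  assert (Hay : a < y) by (destruct (Req_dec a y); subst; lra).
  destruct (first_zero w a y) as [z [Hz [Hwz Hpos]]]; try assumption.
  { intros x Hx; apply continuity_pt_filterlim.
    apply (ex_derive_continuous (V := R_NormedModule)); exists (dw x); apply Hd; lra. }
  destruct (is_derive_pos_at_zero_left w a z (dw z)) as [t [Ht Hwt]];
    try apply Hd; try apply Hzero; try lra.
  specialize (Hpos t ltac:(lra)); lra.
Qed.

Lemma lyapunov_slope_nonpos (a b y k U P W : R) :
  0 < a <= y -> y < b -> 0 < k -> 0 < U -> 0 < W -> W = y * P - U ->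
  - (y * ((1 + P ^ 2) * (W / 2 + k / U))) / W ^ 2 + a / (2 * b) * P <= 0.
Proof.
  intros Ha Hb Hk HU HW HWdef.
  assert (HP : 0 < P) by nra.
  assert (Hq : P ^ 2 * W / 2 <= (1 + P ^ 2) * (W / 2 + k / U)).
  { assert (0 < k / U) by (apply Rdiv_lt_0_compat; lra). nra. }
  assert (Hkey : a / (2 * b) * P * W ^ 2 <= y * ((1 + P ^ 2) * (W / 2 + k / U))).
  { apply Rle_trans with (y * (P ^ 2 * W / 2)).
    2: { apply Rmult_le_compat_l; lra. }
    assert (HWb : W <= b * P) by nra.
    apply (Rmult_le_reg_l (2 * b)); [lra|].
    replace (2 * b * (a / (2 * b) * P * W ^ 2)) with (a * P * W * W) by (field; lra).
    assert (0 < a * P * W) by (apply Rmult_lt_0_compat; [apply Rmult_lt_0_compat|]; lra).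
    assert (a * P * W * W <= a * P * W * (b * P)) by (apply Rmult_le_compat_l; lra).
    assert (a * (b * P ^ 2 * W) <= y * (b * P ^ 2 * W)).
    { apply Rmult_le_compat_r; [|lra]. assert (0 < b) by lra.
      apply Rmult_le_pos; [|lra]; apply Rmult_le_pos; [lra | apply pow2_ge_0]. }
    nra. }
  apply (Rmult_le_reg_r (W ^ 2)); [nra|].
  replace ((- (y * ((1 + P ^ 2) * (W / 2 + k / U))) / W ^ 2 + a / (2 * b) * P) * W ^ 2)
    with (a / (2 * b) * P * W ^ 2 - y * ((1 + P ^ 2) * (W / 2 + k / U))) by (field; lra).
  lra.
Qed.

Lemma slope_le_of_energy_le (k U P E : R) :
  0 < k -> 0 < U -> /2 * ln (1 + P ^ 2) - k * ln U + U ^ 2 / 4 <= E ->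
  P <= exp (2 * (E + k ^ 2)).
Proof.
  intros Hk HU HE.
  assert (Hln : ln U < U).
  { rewrite <- (ln_exp U) at 2; apply ln_increasing; [exact HU|].
    pose proof (exp_ineq1 U); lra. }
  assert (Hbound : ln (1 + P ^ 2) <= 2 * (E + k ^ 2)).
  { assert (k * ln U <= k * U) by (apply Rmult_le_compat_l; lra).
    pose proof (pow2_ge_0 (U - 2 * k)); nra. }
  assert (1 + P ^ 2 <= exp (2 * (E + k ^ 2))); [|nra].
  apply Rnot_lt_le; intro Hlt; rewrite <- (exp_ln (1 + P ^ 2)) in Hlt by nra.
  apply exp_lt_inv in Hlt; lra.
Qed.

Definition ode_at (k : R) (u p q : R -> R) (x : R) : Prop :=
  0 < u x /\ is_derive u x (p x) /\ is_derive p x (q x) /\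
  q x / (1 + p x ^ 2) = x * p x / 2 - u x / 2 + k / u x.

Definition energy (k : R) (u p : R -> R) (y : R) : R :=
  /2 * ln (1 + p y ^ 2) - k * ln (u y) + u y ^ 2 / 4.

(* [- tangent_gap u p y] is the value at 0 of the tangent line to [u] at [y]. *)
Definition tangent_gap (u p : R -> R) (y : R) : R := y * p y - u y.

Section LeftLimit.

Variables (k a b : R) (u p q : R -> R).
Hypothesis k_pos : 0 < k.
Hypothesis a_lt_b : a < b.
Hypothesis solves : forall x, a <= x < b -> ode_at k u p q x.

Lemma solution_pos x : a <= x < b -> 0 < u x.
Proof. intro Hx; apply (solves x Hx). Qed.

Lemma solution_derive x : a <= x < b -> is_derive u x (p x).
Proof. intro Hx; apply (solves x Hx). Qed.

Lemma solution_slope_derive x : a <= x < b -> is_derive p x (q x).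
Proof. intro Hx; apply (solves x Hx). Qed.

Lemma solution_second_derivative x : a <= x < b ->
  q x = (1 + p x ^ 2) * (tangent_gap u p x / 2 + k / u x).
Proof.
  intro Hx; destruct (solves x Hx) as [Hu [_ [_ Hode]]].
  assert (H1 : 0 < 1 + p x ^ 2) by nra.
  replace (q x) with (q x / (1 + p x ^ 2) * (1 + p x ^ 2)) by (field; lra).
  rewrite Hode; unfold tangent_gap; field; lra.
Qed.

Lemma energy_derive x : a <= x < b -> is_derive (energy k u p) x (x * p x ^ 2 / 2).
Proof.
  intro Hx; destruct (solves x Hx) as [Hu [Hdu [Hdp _]]].
  pose proof (solution_second_derivative x Hx) as Hq.
  unfold energy; auto_derive_with_hyps.
  - nra.
  - rewrite Hq; unfold tangent_gap; field; split; [lra | nra].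
Qed.

Lemma cvg_at_left_nonpos_end : b <= 0 -> exists L, filterlim u (at_left b) (locally L).
Proof.
  intro Hb.
  assert (Henergy : forall y, a <= y < b -> energy k u p y <= energy k u p a).
  { intros y Hy; apply (nonincreasing_of_derive_nonpos _ (fun x => x * p x ^ 2 / 2) a b);
      try lra; [exact energy_derive|].
    intros x Hx; pose proof (pow2_ge_0 (p x)); nra. }
  apply (cvg_at_left_of_derive_le u p a b 0 (exp (2 * (energy k u p a + k ^ 2))));
    [lra | left; apply exp_pos | exact solution_derive | |].
  - intros y Hy; apply (slope_le_of_energy_le k (u y)); [lra | now apply solution_pos |].
    exact (Henergy y Hy).
  - intros y Hy; left; now apply solution_pos.
Qed.

Hypothesis a_pos : 0 < a.

Lemma tangent_gap_derive x : a <= x < b -> is_derive (tangent_gap u p) x (x * q x).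
Proof.
  intro Hx; pose proof (solution_derive x Hx); pose proof (solution_slope_derive x Hx).
  unfold tangent_gap; auto_derive_with_hyps; ring.
Qed.

Lemma cvg_at_left_gap_pos x2 : a <= x2 < b -> 0 < tangent_gap u p x2 ->
  exists L, filterlim u (at_left b) (locally L).
Proof.
  intros Hx2 Hgap2.
  assert (Hgap : forall y, x2 <= y < b -> 0 < tangent_gap u p y).
  { apply (positive_barrier _ (fun x => x * q x)); [| |exact Hgap2].
    - intros x Hx; apply tangent_gap_derive; lra.
    - intros x Hx H0; rewrite solution_second_derivative, H0 by lra.
      pose proof (solution_pos x ltac:(lra)).
      assert (0 < k / u x) by (apply Rdiv_lt_0_compat; lra).
      apply Rmult_lt_0_compat; [lra|]; apply Rmult_lt_0_compat; nra. }
  assert (Hslope : forall y, x2 <= y < b -> 0 < p y).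
  { intros y Hy; specialize (Hgap y Hy); pose proof (solution_pos y ltac:(lra)).
    unfold tangent_gap in Hgap; nra. }
  set (c := a / (2 * b)).
  set (Phi := fun y => / tangent_gap u p y + c * u y).
  assert (HPhi : forall y, x2 <= y < b -> Phi y <= Phi x2).
  { intros y Hy; apply (nonincreasing_of_derive_nonpos Phi
        (fun x => - (x * q x) / tangent_gap u p x ^ 2 + c * p x) x2 b); try lra.
    - intros x Hx; pose proof (tangent_gap_derive x ltac:(lra)).
      pose proof (solution_derive x ltac:(lra)); specialize (Hgap x Hx).
      unfold Phi; auto_derive_with_hyps; [lra | field; lra].
    - intros x Hx; rewrite solution_second_derivative by lra.
      apply (lyapunov_slope_nonpos a b x k (u x)); try lra;
        [apply solution_pos; lra | apply Hgap; lra | reflexivity]. }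
  destruct (cvg_at_left_of_derive_le (fun y => - u y) (fun y => - p y) x2 b
              (- (Phi x2 / c)) 0) as [L HL]; try lra.
  - intros x Hx; pose proof (solution_derive x ltac:(lra)); auto_derive_with_hyps; ring.
  - intros x Hx; specialize (Hslope x Hx); lra.
  - intros x Hx; specialize (HPhi x Hx); specialize (Hgap x Hx).
    assert (0 < c) by (apply Rdiv_lt_0_compat; lra).
    assert (0 < / tangent_gap u p x) by (apply Rinv_0_lt_compat; lra).
    assert (Hcu : c * u x <= Phi x2) by (unfold Phi at 1 in HPhi; lra).
    apply Ropp_le_contravar, (Rmult_le_reg_l c); [lra|].
    replace (c * (Phi x2 / c)) with (Phi x2) by (field; lra); exact Hcu.
  - exists (- L).
    apply (filterlim_ext (fun y => - - u y)); [intro; ring|].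
    apply (filterlim_comp _ _ _ (fun y => - u y) Ropp _ (locally L)); [exact HL|].
    exact (filterlim_opp (V := R_NormedModule) L).
Qed.

Lemma cvg_at_left_gap_nonpos : (forall y, a <= y < b -> tangent_gap u p y <= 0) ->
  exists L, filterlim u (at_left b) (locally L).
Proof.
  intro Hgap.
  assert (Hratio : forall y, a <= y < b -> u y / y <= u a / a).
  { intros y Hy; apply (nonincreasing_of_derive_nonpos (fun x => u x / x)
        (fun x => tangent_gap u p x / x ^ 2) a b); try lra.
    - intros x Hx; pose proof (solution_derive x Hx).
      auto_derive_with_hyps; [lra | unfold tangent_gap; field; lra].
    - intros x Hx; specialize (Hgap x Hx); unfold Rdiv.
      apply Rmult_le_0_r; [lra|]; left; apply Rinv_0_lt_compat; nra. }
  apply (cvg_at_left_of_derive_le u p a b 0 (u a / a)); [lra | | exact solution_derive | |].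
  - left; apply Rdiv_lt_0_compat; [now apply solution_pos | lra].
  - intros y Hy; specialize (Hratio y Hy); specialize (Hgap y Hy).
    unfold tangent_gap in Hgap.
    assert (p y <= u y / y); [|lra].
    apply (Rmult_le_reg_l y); [lra|]; replace (y * (u y / y)) with (u y) by (field; lra); lra.
  - intros y Hy; left; now apply solution_pos.
Qed.

Lemma cvg_at_left_pos_start : exists L, filterlim u (at_left b) (locally L).
Proof.
  destruct (classic (exists x2, a <= x2 < b /\ 0 < tangent_gap u p x2))
    as [[x2 [Hx2 Hgap]]|Hnone].
  - exact (cvg_at_left_gap_pos x2 Hx2 Hgap).
  - apply cvg_at_left_gap_nonpos; intros y Hy; apply Rnot_lt_le; intro Hgap.
    apply Hnone; now exists y.
Qed.

End LeftLimit.

Lemma ode_at_reflect (k : R) (u p q : R -> R) (x : R) :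
  ode_at k u p q (- x) ->
  ode_at k (fun y => u (- y)) (fun y => - p (- y)) (fun y => q (- y)) x.
Proof.
  intros [Hu [Hdu [Hdp Hode]]].
  split; [exact Hu|]; split; [|split].
  - auto_derive_with_hyps; ring.
  - auto_derive_with_hyps; ring.
  - cbv beta; replace ((- p (- x)) ^ 2) with (p (- x) ^ 2) by ring.
    rewrite Hode; unfold Rdiv; ring.
Qed.

Lemma ode_cvg_at_left (k x0 b : R) (u p q : R -> R) :
  0 < k -> x0 < b -> (forall x, x0 < x < b -> ode_at k u p q x) ->
  exists L, filterlim u (at_left b) (locally L).
Proof.
  intros Hk Hx0 Hsol.
  destruct (Rle_or_lt b 0) as [Hb|Hb].
  - apply (cvg_at_left_nonpos_end k ((x0 + b) / 2) b u p q); try lra.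
    intros x Hx; apply Hsol; lra.
  - pose proof (Rmax_l ((x0 + b) / 2) (b / 2)); pose proof (Rmax_r ((x0 + b) / 2) (b / 2)).
    assert (Rmax ((x0 + b) / 2) (b / 2) < b) by (apply Rmax_lub_lt; lra).
    apply (cvg_at_left_pos_start k (Rmax ((x0 + b) / 2) (b / 2)) b u p q); try lra.
    intros x Hx; apply Hsol; lra.
Qed.

Lemma ode_cvg_at_right (k a y0 : R) (u p q : R -> R) :
  0 < k -> a < y0 -> (forall x, a < x < y0 -> ode_at k u p q x) ->
  exists L, filterlim u (at_right a) (locally L).
Proof.
  intros Hk Hy0 Hsol.
  destruct (ode_cvg_at_left k (- y0) (- a) (fun y => u (- y)) (fun y => - p (- y))
              (fun y => q (- y))) as [L HL]; try lra.
  { intros x Hx; apply ode_at_reflect, Hsol; lra. }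
  exists L.
  apply (filterlim_ext (fun x => u (- - x))); [intro x; now rewrite Ropp_involutive|].
  exact (filterlim_comp _ _ _ Ropp (fun y => u (- y)) _ _ _ (filterlim_Ropp_right a) HL).
Qed.

Lemma pos_C2_solution_ode_at (n : nat) (a b : Rbar) (u : R -> R) :
  pos_C2_solution n a b u -> forall x, in_ival a b x ->
  ode_at (INR n - 1) u (Derive u) (Derive (Derive u)) x.
Proof.
  intros [_ Hsol] x Hx; destruct (Hsol x Hx) as [Hu [Hdu [Hdp [_ Hode]]]].
  split; [exact Hu|]; split; [|split; [|exact Hode]]; now apply Derive_correct.
Qed.

Lemma Rbar_lt_interval_below (a : Rbar) (b : R) :
  Rbar_lt a b -> exists x0, x0 < b /\ forall x, x0 < x -> Rbar_lt a x.
Proof.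
  destruct a as [a| |]; simpl; intro Hab; try contradiction.
  - now exists a.
  - exists (b - 1); split; [lra | now intros].
Qed.

Lemma Rbar_lt_interval_above (a : R) (b : Rbar) :
  Rbar_lt a b -> exists y0, a < y0 /\ forall x, x < y0 -> Rbar_lt x b.
Proof.
  destruct b as [b| |]; simpl; intro Hab; try contradiction.
  - now exists b.
  - exists (a + 1); split; [lra | now intros].
Qed.

Theorem lemma2p8 (n : nat) (Hn : (2 <= n)%nat) (a b : Rbar) (u : R -> R) :
  maximal_solution n a b u ->
  (forall b0 : R, b = Finite b0 ->
     exists L : R, filterlim u (at_left b0) (locally L)) /\
  (forall a0 : R, a = Finite a0 ->
     exists L : R, filterlim u (at_right a0) (locally L)).
Proof.
  intros [Hsol _].
  assert (Hk : 0 < INR n - 1) by (apply le_INR in Hn; simpl in Hn; lra).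
  pose proof (pos_C2_solution_ode_at n a b u Hsol) as Hode.
  destruct Hsol as [Hab _].
  split.
  - intros b0 ->; destruct (Rbar_lt_interval_below a b0 Hab) as [x0 [Hx0 Hin]].
    apply (ode_cvg_at_left _ x0 b0 u (Derive u) (Derive (Derive u)) Hk Hx0).
    intros x Hx; apply Hode; split; [apply Hin | simpl]; lra.
  - intros a0 ->; destruct (Rbar_lt_interval_above a0 b Hab) as [y0 [Hy0 Hin]].
    apply (ode_cvg_at_right _ a0 y0 u (Derive u) (Derive (Derive u)) Hk Hy0).
    intros x Hx; apply Hode; split; [simpl | apply Hin]; lra.
Qed.
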